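(* Let $V$ be a crossed module and $M$ an abelian $\pi_0(V)$-module. The map $z\mapsto(z_M,z_G)$ is an isomorphism of abelian groups from $Z^2(V,M)$ onto \[\{(c_1,z_0)\in \mathrm{Map}(M_V,M)\times Z^2(G_V,M):\ c_1(nm)=c_1(n)+c_1(m)-z_0(\mu(n),\mu(m)),\ c_1({}^gm)=\bar g\cdot c_1(m)+z_0(\mu({}^gm),g)-z_0(g,\mu(m))\ \forall m,n\in M_V,g\in G_V\}.\] Equivalently, $Z^2(V,M)$ together with $z\mapsto z_M$ and $z\mapsto z_G$ is the pullback of the homomorphisms $\mathrm{Map}(M_V,M)\to C^2(M_V,M)\times \mathrm{Map}(M_V\times G_V,M)$, $c_1\mapsto(dc_1,\alpha_1(c_1))$, and $Z^2(G_V,M)\to C^2(M_V,M)\times\mathrm{Map}(M_V\times G_V,M)$, $c_0\mapsto(c_0\circ(\mu\times\mu),\alpha_0(c_0))$, where $M$ is a trivial $M_V$-module, $\alpha_1(c_1)(m,g)=c_1({}^gm)-\bar g\cdot c_1(m)$ and $\alpha_0(c_0)(m,g)=c_0(\mu({}^gm),g)-c_0(g,\mu(m))$.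
   Context: Crossed module $V$: group $G_V$, group $M_V$ with left $G_V$-action ${}^gm$, homomorphism $\mu:M_V\to G_V$ with $\mu({}^gm)=g\mu(m)g^{-1}$, ${}^{\mu(n)}m=nmn^{-1}$; $\pi_0(V)=G_V/\mu(M_V)$, $\bar g$ the class of $g$. Cochains of $V$: $C^2(V,M)=\mathrm{Map}(M_V\times G_V\times G_V,M)$, and $d:C^2(V,M)\to C^3(V,M)=\mathrm{Map}(M_V\times M_V\times G_V\times M_V\times G_V\times G_V,M)$ is $(dc)(p,n,k,m,h,g)=c(p,\mu(n)k,\mu(m)h)-c(pn,k,hg)+c(n\,{}^km,kh,g)-\bar k\cdot c(m,h,g)$; $Z^2(V,M)=\ker d$. Module part $z_M(m):=z(m,1,1)$, group part $z_G(h,g):=z(1,h,g)$. Group cochains for a group $\Pi$ acting on $A$: $C^n(\Pi,A)=\mathrm{Map}(\Pi^n,A)$, $(dc)(h)$ on $C^1$: $(dc)(h,g)=c(h)-c(hg)+h\cdot c(g)$; on $C^2$: $(dc)(r,q,p)=c(r,q)-c(r,qp)+c(rq,p)-r\cdot c(q,p)$; $G_V$ acts on $M$ via $\pi_0(V)$. *)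

(* the coefficient module M is a zmodType; the groups G_V, M_V
   are arbitrary (possibly infinite) groups given as explicit records. *)
From HB Require Import structures.
From mathcomp Require Import all_boot all_algebra.
Set Implicit Arguments. Unset Strict Implicit. Unset Printing Implicit Defensive.
Import GRing.Theory.
Local Open Scope ring_scope.

Record group := Group {
  gcar :> Type;
  gmul : gcar -> gcar -> gcar;
  gone : gcar;
  ginv : gcar -> gcar;
  gmulA : forall x y z, gmul x (gmul y z) = gmul (gmul x y) z;
  gmul1x : forall x, gmul gone x = x;
  gmulx1 : forall x, gmul x gone = x;
  gmulVx : forall x, gmul (ginv x) x = gone;
  gmulxV : forall x, gmul x (ginv x) = gone
}.
Arguments gmul {g}. Arguments gone {g}. Arguments ginv {g}.

Record crossed_module := CrossedModule {
  GV : group;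
  MV : group;
  cact : GV -> MV -> MV;
  mu : MV -> GV;
  cact1 : forall m, cact gone m = m;
  cactM : forall g h m, cact (gmul g h) m = cact g (cact h m);
  cact_mul : forall g m n, cact g (gmul m n) = gmul (cact g m) (cact g n);
  mu_mul : forall m n, mu (gmul m n) = gmul (mu m) (mu n);
  mu_cact : forall g m, mu (cact g m) = gmul (gmul g (mu m)) (ginv g);
  peiffer : forall n m, cact (mu n) m = gmul (gmul n m) (ginv n)
}.

(* An abelian pi_0(V)-module, presented as a G_V-module on which mu(M_V)
   acts trivially (equivalently, a module over G_V / mu(M_V)). *)
Record pi0_module (V : crossed_module) (A : zmodType) := Pi0Module {
  mact : GV V -> A -> A;
  mactD : forall g a b, mact g (a + b) = mact g a + mact g b;
  mact1 : forall a, mact gone a = a;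
  mactM : forall g h a, mact (gmul g h) a = mact g (mact h a);
  mact_mu : forall m a, mact (mu m) a = a
}.

Section Cochains.
Variables (V : crossed_module) (A : zmodType) (Mod : pi0_module V A).
Local Notation G := (GV V).
Local Notation MM := (MV V).
Local Notation act := (mact Mod).

Definition C2V := MM -> G -> G -> A.

Definition dV (c : C2V) (p n : MM) (k : G) (m : MM) (h g : G) : A :=
  c p (gmul (mu n) k) (gmul (mu m) h) - c (gmul p n) k (gmul h g)
  + c (gmul n (cact k m)) (gmul k h) g - act k (c m h g).

Definition Z2V (z : C2V) : Prop :=
  forall p n k m h g, dV z p n k m h g = 0.

Definition addC2V (z z' : C2V) : C2V := fun m h g => z m h g + z' m h g.

Definition zM (z : C2V) : MM -> A := fun m => z m gone gone.
Definition zG (z : C2V) : G -> G -> A := fun h g => z gone h g.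

Definition dG2 (c : G -> G -> A) (r q p : G) : A :=
  c r q - c r (gmul q p) + c (gmul r q) p - act r (c q p).
Definition Z2G (c : G -> G -> A) : Prop := forall r q p, dG2 c r q p = 0.

Definition target_set (c1 : MM -> A) (z0 : G -> G -> A) : Prop :=
  Z2G z0 /\
  (forall n m : MM, c1 (gmul n m) = c1 n + c1 m - z0 (mu n) (mu m)) /\
  (forall (g : G) (m : MM),
      c1 (cact g m) = act g (c1 m) + z0 (mu (cact g m)) g - z0 g (mu m)).
End Cochains.

(* Evaluating the cocycle identity of a 2-cocycle z of V at arguments where all
   but two entries are units shows z(m, h, g) = z_M(m) - z_G(mu m, h) + z_G(h, g),
   so z is determined by (z_M, z_G); other such specialisations give the two
   relations of the target set and the cocycle condition for z_G.  Conversely,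
   for an arbitrary pair (c1, z0) the coboundary of the cochain defined by that
   formula is an explicit integral combination of the defects of the two
   relations and of the group coboundary of z0, hence vanishes on the target set.
   The abelian group identities involved are checked by reflection: both sides
   are reduced to their integer coefficient vectors on the atoms. *)

From mathcomp Require Import all_boot all_algebra.
From Stdlib Require Import FunctionalExtensionality.
Import GRing.Theory.
Set Implicit Arguments. Unset Strict Implicit. Unset Printing Implicit Defensive.
Local Open Scope ring_scope.

Inductive zexpr := ZAtom of nat | ZAdd of zexpr & zexpr | ZOpp of zexpr | ZZero.

Fixpoint zcoef (e : zexpr) (i : nat) : int :=
  match e with
  | ZAtom j => (i == j)%:Z
  | ZAdd a b => zcoef a i + zcoef b i
  | ZOpp a => - zcoef a i
  | ZZero => 0
  end.

Section ZmodReflection.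
Variables (A : zmodType) (env : seq A).

Fixpoint zeval (e : zexpr) : A :=
  match e with
  | ZAtom j => env`_j
  | ZAdd a b => zeval a + zeval b
  | ZOpp a => - zeval a
  | ZZero => 0
  end.

Lemma zeval_coef e : zeval e = \sum_(0 <= i < size env) env`_i *~ zcoef e i.
Proof.
elim: e => [j|a IHa b IHb|a IHa|] /=.
- have [ltj|lej] := ltnP j (size env).
    rewrite (bigD1_seq j) ?mem_iota ?iota_uniq ?subn0 ?ltj //= eqxx mulr1z.
    rewrite big1 ?addr0 //.
    by move=> i /negPf ->; rewrite mulr0z.
  rewrite nth_default // big1_seq // => i /andP[_].
  rewrite mem_iota subn0 => lti; suff /negPf -> : i != j by rewrite mulr0z.
  by rewrite neq_ltn (leq_trans lti lej).
- by rewrite IHa IHb -big_split; apply: eq_bigr => i _; rewrite mulrzDr.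
- by rewrite IHa -sumrN; apply: eq_bigr => i _; rewrite mulrNz.
- by rewrite big1.
Qed.

Lemma zeval_eq e1 e2 :
  all (fun i => zcoef e1 i == zcoef e2 i) (iota 0 (size env)) ->
  zeval e1 = zeval e2.
Proof.
move=> /allP same; rewrite !zeval_coef big_seq [RHS]big_seq.
apply: eq_bigr => i; rewrite /index_iota subn0 => /same /eqP -> //.
Qed.

End ZmodReflection.

Lemma eq_up_to (A : zmodType) (e x y : A) : e = 0 -> x = y + e -> x = y.
Proof. by move=> ->; rewrite addr0. Qed.

Lemma eq_up_toN (A : zmodType) (e x y : A) : e = 0 -> x = y - e -> x = y.
Proof. by move=> ->; rewrite subr0. Qed.

Ltac list_length l :=
  lazymatch l with
  | nil => constr:(0%nat)
  | _ :: ?t => let n := list_length t in constr:(S n)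
  end.

(* Atoms are consed in front, so an index counts from the end of the list;
   [zmod_solve] reverses the list accordingly. *)
Ltac atom_index x env :=
  lazymatch env with
  | nil => constr:(@None nat)
  | x :: ?t => let n := list_length t in constr:(Some n)
  | _ :: ?t => atom_index x t
  end.

Ltac zreify t env k :=
  lazymatch t with
  | @GRing.add _ ?a ?b =>
      zreify a env ltac:(fun ea env1 =>
        zreify b env1 ltac:(fun eb env2 => k constr:(ZAdd ea eb) env2))
  | @GRing.opp _ ?a => zreify a env ltac:(fun ea env1 => k constr:(ZOpp ea) env1)
  | @GRing.zero _ => k constr:(ZZero) env
  | _ =>
      let r := atom_index t env in
      lazymatch r with
      | Some ?n => k constr:(ZAtom n) env
      | None => let n := list_length env in k constr:(ZAtom n) constr:(t :: env)
      end
  end.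

Ltac zmod_solve :=
  lazymatch goal with |- ?l = ?r =>
    let T := type of l in
    zreify l (@nil T) ltac:(fun el env1 =>
      zreify r env1 ltac:(fun er env =>
        apply: (@zeval_eq _ (rev env) el er); vm_compute; reflexivity))
  end.

Lemma gmul_idem (G : group) (x : G) : gmul x x = x -> x = gone.
Proof. by move=> xx; rewrite -[x in LHS]gmul1x -(gmulVx x) -gmulA xx. Qed.

Lemma gmulKV (G : group) (x y : G) : gmul (gmul x (ginv y)) y = x.
Proof. by rewrite -gmulA gmulVx gmulx1. Qed.

Section CrossedModuleUnit.
Variable V : crossed_module.

Lemma mu1 : mu (c:=V) gone = gone.
Proof. by apply: gmul_idem; rewrite -mu_mul gmul1x. Qed.

Lemma cactx1 (k : GV V) : cact k gone = gone.
Proof. by apply: gmul_idem; rewrite -cact_mul gmul1x. Qed.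

End CrossedModuleUnit.

Section Cocycles.
Variables (V : crossed_module) (A : zmodType) (Mod : pi0_module V A).
Local Notation G := (GV V).
Local Notation MM := (MV V).
Local Notation act := (mact Mod).

Lemma mact0 g : act g 0 = 0.
Proof. by apply: (addrI (act g 0)); rewrite -mactD !addr0. Qed.

Lemma mactN g a : act g (- a) = - act g a.
Proof. by apply: (addrI (act g a)); rewrite -mactD !subrr mact0. Qed.

Ltac unit_simpl := rewrite ?mu1 ?cactx1 ?gmul1x ?gmulx1 ?cact1 ?mact1.

Lemma dV_add z z' p n k m h g :
  dV Mod (addC2V z z') p n k m h g = dV Mod z p n k m h g + dV Mod z' p n k m h g.
Proof. by rewrite /dV /addC2V mactD; zmod_solve. Qed.

Lemma Z2V0 : Z2V Mod (fun _ _ _ => 0).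
Proof. by move=> p n k m h g; rewrite /dV mact0; zmod_solve. Qed.

Lemma Z2V_add z z' : Z2V Mod z -> Z2V Mod z' -> Z2V Mod (addC2V z z').
Proof. by move=> Hz Hz' p n k m h g; rewrite dV_add Hz Hz' addr0. Qed.

Lemma Z2G_x1 c : Z2G Mod c -> forall r, c r gone = act r (c gone gone).
Proof.
move=> Hc r; apply: (eq_up_to (Hc r gone gone)).
by rewrite /dG2 !gmulx1; zmod_solve.
Qed.

Lemma Z2G_1x c : Z2G Mod c -> forall p, c gone p = c gone gone.
Proof.
move=> Hc p; apply: (eq_up_toN (Hc gone gone p)).
by rewrite /dG2 !gmul1x mact1; zmod_solve.
Qed.

Lemma Z2V_zG z : Z2V Mod z -> Z2G Mod (zG z).
Proof. by move=> Hz r q p; have := Hz gone gone r gone q p; rewrite /dV; unit_simpl. Qed.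

Definition cocycle_of (c1 : MM -> A) (z0 : G -> G -> A) : C2V V A :=
  fun m h g => c1 m - z0 (mu m) h + z0 h g.

Lemma Z2VE z : Z2V Mod z ->
  forall x k g, z x k g = zM z x - zG z (mu x) k + zG z k g.
Proof.
move=> Hz; have mid1 x g : z x gone g = zM z x.
  apply: (eq_up_toN (Hz x gone gone gone gone g)).
  by rewrite /dV /zM; unit_simpl; zmod_solve.
move=> x k g; apply: (eq_up_to (Hz gone x gone gone k g)).
by rewrite /dV; unit_simpl; rewrite mid1 /zM /zG; zmod_solve.
Qed.

Lemma Z2V_inj z z' : Z2V Mod z -> Z2V Mod z' ->
  zM z = zM z' -> zG z = zG z' -> z = z'.
Proof.
move=> Hz Hz' eM eG; apply: functional_extensionality => x.
apply: functional_extensionality => k; apply: functional_extensionality => g.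
by rewrite (Z2VE Hz) (Z2VE Hz') eM eG.
Qed.

Lemma Z2V_zM_mul z : Z2V Mod z ->
  forall n m, zM z (gmul n m) = zM z n + zM z m - zG z (mu n) (mu m).
Proof.
move=> Hz n m; apply: (eq_up_toN (Hz n m gone gone gone gone)).
rewrite /dV; unit_simpl; rewrite (Z2VE Hz n) (Z2G_x1 (Z2V_zG Hz)) mact_mu.
by rewrite /zM /zG; zmod_solve.
Qed.

Lemma Z2V_zM_cact z : Z2V Mod z -> forall k m,
  zM z (cact k m) = act k (zM z m) + zG z (mu (cact k m)) k - zG z k (mu m).
Proof.
move=> Hz k m; apply: (eq_up_to (Hz gone gone k m gone gone)).
rewrite /dV; unit_simpl; rewrite (Z2VE Hz (cact k m)).
by rewrite /zM /zG; zmod_solve.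
Qed.

Lemma Z2V_target z : Z2V Mod z -> target_set Mod (zM z) (zG z).
Proof.
by move=> Hz; split; last split; [exact: Z2V_zG | exact: Z2V_zM_mul | exact: Z2V_zM_cact].
Qed.

Definition mul_defect (c1 : MM -> A) (z0 : G -> G -> A) (n m : MM) : A :=
  c1 (gmul n m) - (c1 n + c1 m - z0 (mu n) (mu m)).

Definition act_defect (c1 : MM -> A) (z0 : G -> G -> A) (g : G) (m : MM) : A :=
  c1 (cact g m) - (act g (c1 m) + z0 (mu (cact g m)) g - z0 g (mu m)).

Lemma dV_cocycle_of c1 z0 p n k m h g :
  dV Mod (cocycle_of c1 z0) p n k m h g =
    mul_defect c1 z0 n (cact k m) - mul_defect c1 z0 p n + act_defect c1 z0 k m
    + dG2 Mod z0 k h g - dG2 Mod z0 k (mu m) h + dG2 Mod z0 (mu p) (mu n) k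
    - dG2 Mod z0 (mu n) (mu (cact k m)) k + dG2 Mod z0 (mu (gmul n (cact k m))) k h
    - dG2 Mod z0 (mu n) (gmul (mu (cact k m)) k) h
    + dG2 Mod z0 (mu n) k (gmul (mu m) h).
Proof.
rewrite /dV /cocycle_of /mul_defect /act_defect /dG2 !mactD !mactN !mact_mu.
by rewrite !mu_mul !mu_cact !gmulA !gmulKV; zmod_solve.
Qed.

Section TargetSet.
Variables (c1 : MM -> A) (z0 : G -> G -> A).
Hypothesis target : target_set Mod c1 z0.

Lemma target_Z2G : Z2G Mod z0.
Proof. by case: target. Qed.

Lemma target_mul_defect n m : mul_defect c1 z0 n m = 0.
Proof. by case: target => _ [mul _]; rewrite /mul_defect mul subrr. Qed.

Lemma target_act_defect g m : act_defect c1 z0 g m = 0.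
Proof. by case: target => _ [_ actc]; rewrite /act_defect actc subrr. Qed.

Lemma Z2V_cocycle_of : Z2V Mod (cocycle_of c1 z0).
Proof.
move=> p n k m h g; rewrite dV_cocycle_of !target_mul_defect target_act_defect.
by rewrite !target_Z2G; zmod_solve.
Qed.

Lemma zM_cocycle_of : zM (cocycle_of c1 z0) = c1.
Proof.
apply: functional_extensionality => m.
by rewrite /zM /cocycle_of (Z2G_x1 target_Z2G) mact_mu subrK.
Qed.

Lemma zG_cocycle_of : zG (cocycle_of c1 z0) = z0.
Proof.
have c1_1 : c1 gone = z0 gone gone.
  apply: (eq_up_toN (target_mul_defect gone gone)).
  by rewrite /mul_defect gmul1x mu1; zmod_solve.
apply: functional_extensionality => h; apply: functional_extensionality => g.
by rewrite /zG /cocycle_of mu1 (Z2G_1x target_Z2G) c1_1 subrr add0r.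
Qed.

End TargetSet.
End Cocycles.

Theorem corollary3p12 (V : crossed_module) (A : zmodType) (Mod : pi0_module V A) :
  (Z2V Mod (fun _ _ _ => 0)) /\
  (forall z z', Z2V Mod z -> Z2V Mod z' -> Z2V Mod (addC2V z z')) /\
  (forall z z' : C2V V A,
      zM (addC2V z z') = (fun m => zM z m + zM z' m) /\
      zG (addC2V z z') = (fun h g => zG z h g + zG z' h g)) /\
  (forall z, Z2V Mod z -> target_set Mod (zM z) (zG z)) /\
  (forall z z', Z2V Mod z -> Z2V Mod z' -> zM z = zM z' -> zG z = zG z' -> z = z') /\
  (forall c1 z0, target_set Mod c1 z0 ->
      exists z, Z2V Mod z /\ zM z = c1 /\ zG z = z0).
Proof.
split; first exact: Z2V0.
split; first exact: Z2V_add.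
split; first by [].
split; first exact: Z2V_target.
split; first exact: Z2V_inj.
move=> c1 z0 target; exists (cocycle_of c1 z0); split; first exact: Z2V_cocycle_of.
by rewrite (zM_cocycle_of target) (zG_cocycle_of target).
Qed.
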